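(* Let $N\ge 2$ be an integer and let $\Delta_N=\{p=(p_1,\dots,p_N)\in[0,1]^N:\ \sum_{i=1}^N p_i=1\}$ be the set of discrete probability distributions on $N$ points. For $p\in\Delta_N$ define the normalized Shannon entropy $$H(p)=\frac{1}{\log N}\Big(-\sum_{i=1}^N p_i\log p_i\Big)\quad(\text{with }0\log 0=0),$$ the disequilibrium $$D_{SQ}(p)=\sum_{i=1}^N\Big(p_i-\frac1N\Big)^2,$$ and the statistical complexity $C_{SQ}(p)=H(p)\,D_{SQ}(p)$. Then the maximum of $C_{SQ}$ over $\Delta_N$ is achieved on a distribution of the form $$p_k=p_{\max},\qquad p_i=\frac{1-p_{\max}}{N-1}\ \text{ for all } i\in\{1,\dots,N\}\setminus\{k\},$$ for some index $k\in\{1,\dots,N\}$ and some constant $p_{\max}\in[0,1]$; that is, at the appearance of a single component of arbitrary index $k$ over a uniform distribution of the remaining components.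
   Context: Logarithms are taken in a fixed base; the base cancels in the normalization of $H$. *)

From HB Require Import structures.
From mathcomp Require Import all_boot all_order all_algebra.
From mathcomp Require Import all_classical all_reals all_analysis.
Set Implicit Arguments. Unset Strict Implicit. Unset Printing Implicit Defensive.
Import Order.TTheory GRing.Theory Num.Theory.
Local Open Scope ring_scope.

Section Defs.
Variable R : realType.

Definition in_simplex (N : nat) (p : 'I_N -> R) : Prop :=
  (forall i, 0 <= p i <= 1) /\ \sum_(i < N) p i = 1.

(* x log x with the convention 0 log 0 = 0 (natural log; the base cancels) *)
Definition xlnx (x : R) : R := if x == 0 then 0 else x * ln x.

Definition entropyN (N : nat) (p : 'I_N -> R) : R :=
  (- \sum_(i < N) xlnx (p i)) / ln (N%:R).

Definition disequilibrium (N : nat) (p : 'I_N -> R) : R :=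
  \sum_(i < N) (p i - N%:R^-1) ^+ 2.

Definition complexitySQ (N : nat) (p : 'I_N -> R) : R :=
  entropyN p * disequilibrium p.

Definition spike (N : nat) (k : 'I_N) (pmax : R) : 'I_N -> R :=
  fun i => if i == k then pmax else (1 - pmax) / (N.-1)%:R.

End Defs.

From HB Require Import structures.
From mathcomp Require Import all_boot all_order all_algebra.
From mathcomp Require Import all_classical all_reals all_analysis.
From mathcomp Require Import ring lra.
Import Order.TTheory GRing.Theory Num.Theory.
Import numFieldNormedType.Exports.
Local Open Scope ring_scope.

Set Implicit Arguments. Unset Strict Implicit. Unset Printing Implicit Defensive.

(** For [p] in the simplex, choose [t >= 1/N] so that the spike
    [(t, q, ..., q)] (with [q = (1 - t)/(N - 1) <= 1/N]) has the disequilibrium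
    of [p]; Cauchy-Schwarz on the deviations [p_i - 1/N] then gives [p_i <= t].
    Let [g] be the quadratic with [g q = q ln q], [g' q = ln q + 1] and
    [g t = t ln t]. On [[0, t]] we have [x ln x >= g x]: the difference has a
    concave derivative, a double zero at [q] and a zero at [t], so it cannot
    become negative there. As [sum_i g (p_i)] only depends on [sum_i p_i] and
    [sum_i p_i^2], and [g] agrees with [x ln x] on [{q, t}], the spike has at
    least the entropy of [p]. Hence [C_SQ] is maximized along the continuous
    curve of spikes, and the extreme value theorem on [[0, 1]] concludes. *)

Section LnXLnX.
Variable R : realType.
Implicit Types x y z : R.

Lemma ln_le_subr1 x : 0 < x -> ln x <= x - 1.
Proof. by move=> x0; rewrite -[x in ln x](subrKC 1); apply: le_ln1Dx; lra. Qed.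

Lemma ln_sub_le x y : 0 < x -> 0 < y -> ln x - ln y <= (x - y) / y.
Proof.
move=> x0 y0; rewrite -ln_div ?posrE // mulrBl divff ?gt_eqF //.
by apply: ln_le_subr1; rewrite divr_gt0.
Qed.

Lemma ln_chord x y z : 0 < x -> x <= y -> y <= z ->
  ln z * (y - x) + ln x * (z - y) <= ln y * (z - x).
Proof.
move=> x0 xy yz; have y0 := lt_le_trans x0 xy; have z0 := lt_le_trans y0 yz.
have hz : (y - x) * (ln z - ln y) <= (y - x) * ((z - y) / y).
  by rewrite ler_wpM2l ?subr_ge0 // ln_sub_le.
have hx : (z - y) * (ln x - ln y) <= (z - y) * ((x - y) / y).
  by rewrite ler_wpM2l ?subr_ge0 // ln_sub_le.
have e : (y - x) * ((z - y) / y) + (z - y) * ((x - y) / y) = 0.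
  by field; rewrite gt_eqF.
lra.
Qed.

Lemma xlnxE : @xlnx R = fun x => x * ln x.
Proof. by apply/funext => x; rewrite /xlnx; case: eqP => [->|//]; rewrite mul0r. Qed.

Lemma xlnx0 : xlnx (0 : R) = 0.
Proof. by rewrite xlnxE mul0r. Qed.

Lemma xlnx1 : xlnx (1 : R) = 0.
Proof. by rewrite xlnxE ln1 mulr0. Qed.

Lemma xlnx_le x : xlnx x <= x * (x - 1).
Proof.
rewrite xlnxE; have [x0|x0] := ltP 0 x; first by rewrite ler_pM2l // ln_le_subr1.
by rewrite ln0 // mulr0 mulr_le0 // subr_le0 (le_trans x0 ler01).
Qed.

Lemma xlnx_ge x : 2 * (x - Num.sqrt x) <= xlnx x.
Proof.
rewrite xlnxE; have [x0|x0] := ltP 0 x; last first.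
  by rewrite ln0 // mulr0 ler0_sqrtr // subr0 pmulr_rle0.
have s0 : 0 < Num.sqrt x by rewrite sqrtr_gt0.
have lnx : ln x = 2 * ln (Num.sqrt x) by rewrite -{1}(sqr_sqrtr (ltW x0)) lnXn // mulr_natl.
have h : ln (Num.sqrt x)^-1 <= (Num.sqrt x)^-1 - 1 by apply: ln_le_subr1; rewrite invr_gt0.
rewrite lnV ?posrE // in h.
have xs : x / Num.sqrt x = Num.sqrt x.
  by rewrite -{1}(sqr_sqrtr (ltW x0)) expr2 mulfK ?gt_eqF.
rewrite lnx; nra.
Qed.

Lemma continuous_xlnx : continuous (@xlnx R).
Proof.
move=> x; have [x0|x0|x0] := ltgtP x 0.
- apply: (near_cst_continuous 0); near=> y; rewrite xlnxE ln0 ?mulr0 //.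
  by apply: ltW; near: y; exact: lt_nbhsl.
- rewrite xlnxE; apply: continuousM => //; exact: continuous_ln.
- have lower : ((fun y => 2 * (y - Num.sqrt y)) @ (0 : R) --> 2 * (0 - Num.sqrt 0))%classic.
    by apply: cvgM; [exact: cvg_cst | apply: cvgB => //; exact: sqrt_continuous].
  have upper : ((fun y => y * (y - 1)) @ (0 : R) --> (0 * (0 - 1) : R))%classic.
    by apply: cvgM => //; apply: cvgB => //; exact: cvg_cst.
  rewrite sqrtr0 subrr mulr0 in lower; rewrite mul0r in upper.
  rewrite /continuous_at x0 xlnx0; apply: squeeze_cvgr lower upper.
  by near=> y; rewrite xlnx_ge xlnx_le.
Unshelve. all: by end_near. Qed.
End LnXLnX.

Section ConcaveDerivative.
Variables (R : realType) (f df : R -> R).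
Hypothesis f_deriv : forall x : R, 0 < x -> is_derive x 1 f (df x).
Hypothesis df_concave : forall x y z : R, 0 < x -> x < y -> y < z ->
  df x * (z - y) + df z * (y - x) <= df y * (z - x).

Let mvt (x y : R) : 0 < x -> x < y ->
  exists2 c, x < c < y & f y - f x = df c * (y - x).
Proof.
move=> x0 xy; have [c cxy e] : exists2 c, c \in `]x, y[ & f y - f x = df c * (y - x).
  apply: MVT => // [c|].
  - by rewrite in_itv /= => /andP[xc _]; apply: f_deriv; exact: lt_trans xc.
  - apply: derivable_within_continuous => c; rewrite in_itv /= => /andP[xc _].
    by have [] := f_deriv (lt_le_trans x0 xc).
by exists c; move: cxy; rewrite in_itv.
Qed.

Lemma ge0_concave_derivative (q t x : R) : 0 < q < t -> f q = 0 -> df q = 0 -> f t = 0 ->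
  0 < x <= t -> 0 <= f x.
Proof.
move=> /andP[q0 qt] fq dfq ft /andP[x0 xt]; rewrite leNgt; apply/negP => fx.
have [xq|qx|xq] := ltgtP x q; last by rewrite xq fq ltxx in fx.
- have [a /andP[xa aq] ea] := mvt x0 xq.
  have [b /andP[qb bt] eb] := mvt q0 qt.
  rewrite fq in ea; rewrite fq ft subrr in eb.
  have dfa : 0 < df a by rewrite -(@pmulr_lgt0 _ (q - x)) ?subr_gt0 // -ea sub0r oppr_gt0.
  have dfb : df b = 0.
    by move/esym/eqP: eb; rewrite mulf_eq0 subr_eq0 (gt_eqF qt) orbF => /eqP.
  have := df_concave (lt_trans x0 xa) aq qb; rewrite dfq dfb !mul0r addr0.
  nra.
- have xt' : x < t by rewrite lt_neqAle xt andbT; apply: contraTneq fx => ->; rewrite ft ltxx.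
  have [a /andP[qa ax] ea] := mvt q0 qx.
  have [b /andP[xb bt] eb] := mvt x0 xt'.
  rewrite fq subr0 in ea; rewrite ft sub0r in eb.
  have dfa : df a < 0 by rewrite -(@pmulr_llt0 _ (x - q)) ?subr_gt0 // -ea.
  have dfb : 0 < df b by rewrite -(@pmulr_lgt0 _ (t - x)) ?subr_gt0 // -eb oppr_gt0.
  have := df_concave q0 qa (lt_trans ax xb); rewrite dfq mul0r add0r.
  nra.
Qed.
End ConcaveDerivative.

Section XLnXBregman.
Variable R : realType.
Implicit Types q t x : R.

Definition xlnx_bregman q x := xlnx x - xlnx q - (ln q + 1) * (x - q).

Lemma xlnx_bregmanxx q : xlnx_bregman q q = 0.
Proof. by rewrite /xlnx_bregman; ring. Qed.

Lemma xlnx_bregman0 q : xlnx_bregman q 0 = q.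
Proof. by rewrite /xlnx_bregman xlnxE mul0r; ring. Qed.

Lemma xlnx_bregman_le q x : 0 < q -> 0 < x -> xlnx_bregman q x <= (x - q) ^+ 2 / q.
Proof.
move=> q0 x0; have := ler_wpM2l (ltW x0) (ln_sub_le x0 q0).
have -> : (x - q) ^+ 2 / q = x * ((x - q) / q) - (x - q) by field; rewrite gt_eqF.
by rewrite /xlnx_bregman xlnxE; lra.
Qed.

Lemma is_derive_xlnx_bregman q x : 0 < x ->
  is_derive x 1 (xlnx_bregman q) (ln x - ln q).
Proof.
move=> x0; rewrite /xlnx_bregman xlnxE.
have dln : is_derive x 1 (@ln R) x^-1 := is_derive1_ln x0.
apply: is_derive_eq; rewrite /GRing.scale /= mulr1 mulfV ?gt_eqF //; ring.
Qed.

Lemma xlnx_bregman_ge_quadratic q t x : 0 < q < t -> 0 <= x <= t ->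
  xlnx_bregman q t / (t - q) ^+ 2 * (x - q) ^+ 2 <= xlnx_bregman q x.
Proof.
move=> /andP[q0 qt] /andP[x0 xt]; set g := xlnx_bregman q t / (t - q) ^+ 2.
have tq : (t - q) ^+ 2 != 0 by rewrite sqrf_eq0 subr_eq0 gt_eqF.
have [<-|x_neq0] := eqVneq 0 x.
  have g_le : g <= q^-1.
    rewrite /g ler_pdivrMr ?exprn_gt0 ?subr_gt0 // mulrC.
    exact: xlnx_bregman_le (lt_trans q0 qt).
  rewrite xlnx_bregman0 sub0r sqrrN.
  have qq : q^-1 * q = 1 by rewrite mulVf ?gt_eqF.
  nra.
rewrite -subr_ge0.
apply: (ge0_concave_derivative (f := fun x => xlnx_bregman q x - g * (x - q) ^+ 2)
         (df := fun x => ln x - ln q - 2 * g * (x - q)) _ _ (q := q) (t := t)).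
- move=> y y0; have := is_derive_xlnx_bregman q y0 => ?.
  by apply: is_derive_eq; rewrite /GRing.scale /=; ring.
- move=> a b c a0 ab bc; have := ln_chord a0 (ltW ab) (ltW bc); lra.
- by rewrite q0 qt.
- by rewrite xlnx_bregmanxx; ring.
- by rewrite /=; ring.
- by rewrite /g divfK // subrr.
- by rewrite lt_neqAle x_neq0 x0 xt.
Qed.
End XLnXBregman.

Section SumXLnX.
Variables (R : realType) (I : finType).

Lemma sum_sqr_subr (z : I -> R) c :
  \sum_i (z i - c) ^+ 2 = \sum_i z i ^+ 2 - 2 * c * \sum_i z i + #|I|%:R * c ^+ 2.
Proof.
rewrite (eq_bigr (fun i => z i ^+ 2 + (- (2 * c) * z i + c ^+ 2))); last by move=> i _; ring.
by rewrite !big_split /= -mulr_sumr sumr_const mulr_natl; ring.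
Qed.

Lemma sum_xlnx_le_two_valued (x y : I -> R) (q t : R) :
  0 < q < t -> (forall i, 0 <= x i <= t) -> (forall i, y i = q \/ y i = t) ->
  \sum_i x i = \sum_i y i -> \sum_i x i ^+ 2 = \sum_i y i ^+ 2 ->
  \sum_i xlnx (y i) <= \sum_i xlnx (x i).
Proof.
move=> /andP[q0 qt] x0t yqt Sxy Qxy; set g := xlnx_bregman q t / (t - q) ^+ 2.
have sum_xlnxE (z : I -> R) : \sum_i xlnx (z i) = \sum_i xlnx_bregman q (z i) +
    (#|I|%:R * xlnx q + (ln q + 1) * (\sum_i z i - #|I|%:R * q)).
  rewrite /xlnx_bregman !sumrB -mulr_sumr sumrB !sumr_const !mulr_natl; ring.
have yB i : xlnx_bregman q (y i) = g * (y i - q) ^+ 2.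
  have [->|->] := yqt i; first by rewrite xlnx_bregmanxx subrr expr0n mulr0.
  by rewrite /g divfK // sqrf_eq0 subr_eq0 gt_eqF.
have sqr_eq : \sum_i (x i - q) ^+ 2 = \sum_i (y i - q) ^+ 2 by rewrite !sum_sqr_subr Sxy Qxy.
rewrite !sum_xlnxE Sxy lerD2r (eq_bigr _ (fun i _ => yB i)) -mulr_sumr -sqr_eq mulr_sumr.
by apply: ler_sum => i _; apply: xlnx_bregman_ge_quadratic; rewrite ?q0 ?qt.
Qed.

Lemma sum_xlnx_eq0 (p : I -> R) :
  (forall i, 0 <= p i <= 1) -> \sum_i p i ^+ 2 = \sum_i p i -> \sum_i xlnx (p i) = 0.
Proof.
move=> p01 sq.
have terms_ge0 i : 0 <= p i * (1 - p i).
  by have /andP[p0 p1] := p01 i; rewrite mulr_ge0 ?subr_ge0.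
have terms_sum : \sum_i p i * (1 - p i) = 0.
  by rewrite (eq_bigr (fun i => p i - p i ^+ 2)) ?sumrB ?sq ?subrr // => i _; ring.
apply: big1 => i _; move: (psumr_eq0P (fun i _ => terms_ge0 i) terms_sum) => /(_ i isT)/eqP.
by rewrite mulf_eq0 subr_eq0 => /orP[/eqP-> | /eqP<-]; [exact: xlnx0 | exact: xlnx1].
Qed.
End SumXLnX.

Section Spike.
Variables (R : realType) (N : nat).
Hypothesis N_gt1 : (1 < N)%N.
Local Notation M := ((N.-1)%:R : R).
Local Notation c := ((N%:R : R)^-1).

Let M_gt0 : 0 < M. Proof. by rewrite ltr0n -ltnS prednK // ltnW. Qed.
Let M_ge1 : 1 <= M. Proof. by rewrite ler1n -ltnS prednK // ltnW. Qed.
Let NM : N%:R = M + 1 :> R. Proof. by rewrite natr1 prednK // ltnW. Qed.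

Lemma spike_sum (k : 'I_N) (t : R) (F : R -> R) :
  \sum_i F (spike k t i) = F t + M * F ((1 - t) / M).
Proof.
rewrite (bigD1 k) //= /spike eqxx; congr (_ + _).
rewrite (eq_bigr (fun _ => F ((1 - t) / M))); last by move=> i /negbTE ->.
by rewrite sumr_const cardC1 card_ord mulr_natl.
Qed.

Lemma spike_in_simplex (k : 'I_N) (t : R) : 0 <= t <= 1 -> in_simplex (spike k t).
Proof.
move=> /andP[t0 t1]; split; last by rewrite (spike_sum k t id); field; rewrite gt_eqF.
move=> i; rewrite /spike; case: eqP => _; first by rewrite t0 t1.
apply/andP; split; first by rewrite divr_ge0 // ?subr_ge0 // ltW.
by rewrite ler_pdivrMr // mul1r; have := M_ge1; lra.
Qed.

Lemma disequilibriumE (p : 'I_N -> R) :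
  \sum_i p i = 1 -> disequilibrium p = \sum_i p i ^+ 2 - c.
Proof.
move=> p1; rewrite /disequilibrium sum_sqr_subr p1 card_ord NM.
by field; have := M_gt0; lra.
Qed.

Lemma disequilibrium_spike (k : 'I_N) (t : R) :
  disequilibrium (spike k t) = N%:R / M * (t - c) ^+ 2.
Proof.
rewrite /disequilibrium (spike_sum k t (fun v => (v - c) ^+ 2)) NM.
by field; have := M_gt0; lra.
Qed.

Lemma centered_sqr_le_sum_sqr (d : 'I_N -> R) j :
  \sum_i d i = 0 -> N%:R * d j ^+ 2 <= M * \sum_i d i ^+ 2.
Proof.
move=> d0; set e := d j / M.
have rest_ge0 : 0 <= \sum_(i | i != j) (d i + e) ^+ 2.
  by apply: sumr_ge0 => i _; exact: sqr_ge0.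
have split_j : \sum_i (d i + e) ^+ 2 = (d j + e) ^+ 2 + \sum_(i | i != j) (d i + e) ^+ 2.
  by rewrite (bigD1 j).
have full : \sum_i (d i + e) ^+ 2 = \sum_i d i ^+ 2 + N%:R * e ^+ 2.
  rewrite (eq_bigr (fun i => (d i - - e) ^+ 2)) => [|i _]; last by rewrite opprK.
  by rewrite sum_sqr_subr d0 card_ord sqrrN; ring.
have -> : N%:R * d j ^+ 2 = M * ((d j + e) ^+ 2 - N%:R * e ^+ 2).
  by rewrite /e NM; field; have := M_gt0; lra.
by rewrite ler_pM2l //; lra.
Qed.

Lemma spike_with_disequilibrium (k : 'I_N) (p : 'I_N -> R) : in_simplex p -> exists t,
  [/\ c <= t <= 1, disequilibrium (spike k t) = disequilibrium p & forall i, p i <= t].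
Proof.
move=> [p01 p1]; set D := disequilibrium p.
have c_gt0 : 0 < c by rewrite invr_gt0 NM; have := M_gt0; lra.
have MN0 : 0 <= M / N%:R by rewrite divr_ge0 // ltW // NM; have := M_gt0; lra.
have D0 : 0 <= D by apply: sumr_ge0 => i _; exact: sqr_ge0.
have MD0 : 0 <= M / N%:R * D := mulr_ge0 MN0 D0.
set r := Num.sqrt (M / N%:R * D).
have r0 : 0 <= r := sqrtr_ge0 _.
have dev_sum : \sum_i (p i - c) = 0.
  rewrite sumrB p1 sumr_const card_ord -[c *+ N]mulr_natl mulfV ?subrr //.
  by rewrite gt_eqF // ltr0n ltnW.
have D_le : D <= M / N%:R.
  rewrite /D disequilibriumE // -[X in _ <= X](_ : 1 - c = _); last first.
    by rewrite NM; field; have := M_gt0; lra.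
  rewrite lerD2r -p1; apply: ler_sum => i _.
  by have /andP[] := p01 i; rewrite expr2; exact: ler_piMl.
exists (c + r); split.
- rewrite lerDl r0 /= -lerBrDl.
  suff -> : 1 - c = M / N%:R.
    by rewrite -(ger0_norm MN0) -sqrtr_sqr ler_sqrt ?sqr_ge0 // expr2 ler_wpM2l.
  by rewrite NM; field; have := M_gt0; lra.
- rewrite disequilibrium_spike addrAC subrr add0r sqr_sqrtr //.
  by rewrite mulrA mulrA divfK ?mulfV ?mul1r // gt_eqF // ltr0n ltnW.
- move=> i; rewrite -lerBlDl; apply: le_trans (ler_norm _) _.
  rewrite -sqrtr_sqr ler_sqrt // mulrAC ler_pdivlMr ?NM; last by have := M_gt0; lra.
  by rewrite mulrC -NM; apply: (le_trans (centered_sqr_le_sum_sqr i dev_sum)).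
Qed.

Lemma sum_xlnx_spike_le (k : 'I_N) (p : 'I_N -> R) t : in_simplex p -> c <= t <= 1 ->
  disequilibrium (spike k t) = disequilibrium p -> (forall i, p i <= t) ->
  \sum_i xlnx (spike k t i) <= \sum_i xlnx (p i).
Proof.
move=> [p01 p1] /andP[ct t1] eqD p_le_t; set q := (1 - t) / M.
have c_gt0 : 0 < c by rewrite invr_gt0 ltr0n ltnW.
have c_lt1 : c < 1 by rewrite invf_lt1 ?ltr1n // ltr0n ltnW.
have [s01 s1] : in_simplex (spike k t).
  by apply: spike_in_simplex; rewrite t1 andbT (le_trans (ltW c_gt0) ct).
have sqr_eq : \sum_i p i ^+ 2 = \sum_i spike k t i ^+ 2.
  by move: eqD; rewrite !disequilibriumE // => /addIr ->.
have q_le_c : q <= c.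
  rewrite ler_pdivrMr //; have : M * c = 1 - c by rewrite NM; field; have := M_gt0; lra.
  by move: ct; lra.
have [q_eq0|q_neq0] := eqVneq q 0.
  (* then [t = 1], and [p] as well as the spike are vertices of the simplex *)
  have t_eq1 : t = 1.
    by move: q_eq0 => /eqP; rewrite mulf_eq0 invr_eq0 (gt_eqF M_gt0) orbF subr_eq0 => /eqP ->.
  have s_sqr : \sum_i spike k t i ^+ 2 = \sum_i spike k t i.
    by rewrite (spike_sum k t (fun v => v ^+ 2)) (spike_sum k t id) -/q q_eq0 t_eq1 expr1n expr0n.
  by rewrite !sum_xlnx_eq0 // sqr_eq s_sqr s1.
have q_gt0 : 0 < q by rewrite lt_neqAle eq_sym q_neq0 divr_ge0 // subr_ge0.
have [u [qu p_le_u s_qu]] : exists u,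
    [/\ q < u, forall i, p i <= u & forall i, spike k t i = q \/ spike k t i = u].
  have [qt|tq] := ltP q t.
    by exists t; split => // i; rewrite /spike; case: eqP => _; [right|left].
  (* [t = q]: the spike is uniform, and any [u > q] bounding [p] will do *)
  have t_eq_q : t = q by apply/eqP; rewrite eq_le tq (le_trans q_le_c ct).
  exists 1; split => [|i|i]; first exact: le_lt_trans c_lt1.
    by have /andP[] := p01 i.
  by left; rewrite /spike; case: eqP.
apply: (sum_xlnx_le_two_valued (q := q) (t := u)) => //; first by rewrite q_gt0 qu.
  by move=> i; have /andP[p0 _] := p01 i; rewrite p0 p_le_u.
by rewrite p1 s1.
Qed.

Lemma complexitySQ_le_spike (k : 'I_N) (p : 'I_N -> R) : in_simplex p ->
  exists2 t, 0 <= t <= 1 & complexitySQ p <= complexitySQ (spike k t).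
Proof.
move=> hp; have [t [/andP[ct t1] eqD p_le_t]] := spike_with_disequilibrium k hp.
exists t; first by rewrite t1 andbT (le_trans _ ct) // invr_ge0.
rewrite /complexitySQ eqD ler_wpM2r //; first by apply: sumr_ge0 => i _; exact: sqr_ge0.
rewrite /entropyN ler_pM2r ?invr_gt0 ?ln_gt0 ?ltr1n // lerN2.
by apply: sum_xlnx_spike_le; rewrite ?ct.
Qed.

Lemma continuous_complexitySQ_spike (k : 'I_N) :
  continuous (fun t : R => complexitySQ (spike k t)).
Proof.
have affine : continuous (fun t : R => (1 - t) / M).
  by move=> t; apply: cvgM; [apply: cvgB => //; exact: cvg_cst | exact: cvg_cst].
have xlnx_affine : continuous (fun t : R => xlnx ((1 - t) / M)).
  move=> t; apply: (@continuous_comp _ _ _ (fun t : R => (1 - t) / M) (@xlnx R)).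
    exact: affine.
  exact: continuous_xlnx.
have -> : (fun t => complexitySQ (spike k t)) = fun t =>
    - (xlnx t + M * xlnx ((1 - t) / M)) / ln N%:R * ((t - c) ^+ 2 + M * ((1 - t) / M - c) ^+ 2).
  apply/funext => t; rewrite /complexitySQ /entropyN /disequilibrium.
  by rewrite (spike_sum k t (@xlnx R)) (spike_sum k t (fun v => (v - c) ^+ 2)).
move=> t; apply: cvgM.
- apply: cvgM; last exact: cvg_cst.
  apply: cvgN; apply: cvgD; first exact: continuous_xlnx.
  by apply: cvgM; [exact: cvg_cst | exact: xlnx_affine].
- apply: cvgD; first by apply: cvgM; apply: cvgB => //; exact: cvg_cst.
  apply: cvgM; first exact: cvg_cst.
  by apply: cvgM; (apply: cvgB; [exact: affine | exact: cvg_cst]).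
Qed.
End Spike.

Theorem lemma3 (R : realType) (N : nat) (hN : (2 <= N)%N) :
  exists (k : 'I_N) (pmax : R),
    0 <= pmax <= 1 /\ in_simplex (spike k pmax) /\
    (forall p : 'I_N -> R, in_simplex p ->
       complexitySQ p <= complexitySQ (spike k pmax)).
Proof.
pose k : 'I_N := Ordinal (ltnW hN).
have cont : {within `[0, 1], continuous (fun t : R => complexitySQ (spike k t))}%classic.
  exact/continuous_subspaceT/continuous_complexitySQ_spike.
have [c c01 c_max] := EVT_max ler01 cont.
have c_01 : 0 <= c <= 1 by move: c01; rewrite in_itv.
exists k, c; split => //; split; first exact: spike_in_simplex.
move=> p /(complexitySQ_le_spike hN k) [t t01 le_t].
by apply: le_trans le_t (c_max t _); rewrite in_itv.
Qed.
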